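(* Let $n\ge2$ and let $G$ be a finite simple graph with independence number $n$. Let $P_G(z)=I_G(z)-1$. If the Julia set $\mathcal{J}(P_G)$ (the independence fractal of $G$) is a circle, then $G=K_n^c$ (the graph on $n$ vertices with no edges) and the circle is $\{z\in\mathbb{C}: |z+1|=1\}$.
   Context: For a finite simple graph $G$, the independence polynomial is $I_G(z)=\sum_{i=0}^{\alpha} a_i z^i$, where $a_i$ is the number of sets of $i$ pairwise non-adjacent vertices and the independence number $\alpha$ is the largest such $i$. $P_G=I_G-1$ is the reduced independence polynomial. For a polynomial $P$ of degree at least two, the Julia set $\mathcal{J}(P)$ is the boundary of $\{z: (P^n(z))_{n>0}\text{ bounded}\}$. For $G\neq K_1$ the independence fractal $\mathcal{F}(G)$ of $G$ equals $\mathcal{J}(P_G)$. *)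

From HB Require Import structures.
From mathcomp Require Import all_boot all_order all_algebra.
From mathcomp Require Import complex.
From mathcomp Require Import reals.
Set Implicit Arguments. Unset Strict Implicit. Unset Printing Implicit Defensive.
Import Order.TTheory GRing.Theory Num.Theory.
Local Open Scope ring_scope.
Local Open Scope complex_scope.

Definition simple_graph (T : finType) (e : rel T) : Prop :=
  symmetric e /\ irreflexive e.

Definition independent (T : finType) (e : rel T) (A : {set T}) : bool :=
  [forall x in A, forall y in A, ~~ e x y].

Definition indep_number (T : finType) (e : rel T) : nat :=
  \max_(A : {set T} | independent e A) #|A|.

Definition indep_count (T : finType) (e : rel T) (i : nat) : nat :=
  #|[set A : {set T} | independent e A & #|A| == i]|.

Definition indep_poly (R : nzRingType) (T : finType) (e : rel T) : {poly R} :=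
  \sum_(i < (indep_number e).+1) (indep_count e i)%:R *: 'X^i.

Definition red_indep_poly (R : nzRingType) (T : finType) (e : rel T) : {poly R} :=
  indep_poly R e - 1.

Definition filled_julia (R : realType) (p : {poly R[i]}) : R[i] -> Prop :=
  fun z => exists M : R, forall k : nat, `|iter k (fun w => p.[w]) z| <= M%:C.

Definition boundary (R : realType) (S : R[i] -> Prop) : R[i] -> Prop :=
  fun z => forall eps : R, 0 < eps ->
    (exists w, S w /\ `|w - z| < eps%:C) /\ (exists w, ~ S w /\ `|w - z| < eps%:C).

Definition julia (R : realType) (p : {poly R[i]}) : R[i] -> Prop :=
  boundary (filled_julia p).

Definition is_circle (R : realType) (S : R[i] -> Prop) : Prop :=
  exists (c : R[i]) (r : R), 0 < r /\ forall z, S z <-> `|z - c| = r%:C.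

From HB Require Import structures.
From mathcomp Require Import all_boot all_order all_algebra.
From mathcomp Require Import complex.
From mathcomp Require Import reals.
From mathcomp Require Import ring lra.

(* The Julia set of a polynomial P is forward invariant, so if it is the
   circle |z - c| = r, then S(u) = P(u + c) - c satisfies |S(u)| = r whenever
   |u| = r.  Since conj u = r^2 / u there, S(u) * u^d S^*(r^2 / u) = r^2 u^d on
   the circle (S^* conjugating the coefficients), hence as polynomials, and
   comparing low-order coefficients forces S = k X^d, i.e. P = k (X - c)^n + c.  The constant and linear
   coefficients of P_G are 0 and |V(G)|; they give k (-c)^(n-1) = 1 and
   |V(G)| = n, so a maximum independent set is all of V(G) and G is edgeless.
   Then a_i = C(n, i), and comparing the two leading coefficients of
   P_G = (X + 1)^n - 1 with those of k (X - c)^n + c gives k = 1 and c = -1;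
   finally r^n = r gives r = 1. *)

Set Implicit Arguments.
Unset Strict Implicit.
Unset Printing Implicit Defensive.

Import Order.TTheory GRing.Theory Num.Theory.
Local Open Scope ring_scope.
Local Open Scope complex_scope.

Lemma coef_XaddC_exp (F : comNzRingType) (a : F) n j :
  (('X + a%:P) ^+ n)`_j = a ^+ (n - j) *+ 'C(n, j).
Proof.
elim: n j => [|n IH] j; first by rewrite expr0 coef1 bin0n; case: j.
rewrite exprS mulrDl coefD coefXM coefCM; case: j => [|j] /=.
  by rewrite add0r IH !bin0 !subn0 exprS.
rewrite !IH binS mulrnDr subSS addrC; congr (_ + _).
have [j_lt_n|n_le_j] := ltnP j n; first by rewrite mulrnAr -exprS subnSK.
by rewrite bin_small ?ltnS // !mulr0n mulr0.
Qed.

Lemma coef_shifted_power (F : comNzRingType) (k c : F) n j :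
  (k *: ('X - c%:P) ^+ n + c%:P)`_j =
    k * ((- c) ^+ (n - j) *+ 'C(n, j)) + (if j == 0%N then c else 0).
Proof. by rewrite coefD coefZ -polyCN coef_XaddC_exp coefC. Qed.

Lemma pexpr_id_eq1 (F : numDomainType) (x : F) n :
  0 < x -> (1 < n)%N -> x ^+ n = x -> x = 1.
Proof.
move=> x_gt0 n_gt1 xn_x; have n1_gt0 : (0 < n.-1)%N by rewrite -subn1 subn_gt0.
have : x ^+ n.-1 * x = 1 * x by rewrite -exprSr prednK ?xn_x ?mul1r // ltnW.
by move/(mulIf (lt0r_neq0 x_gt0))/eqP; rewrite pexpr_eq1 ?ltW // => /eqP.
Qed.

Lemma coef_mul_low_eq0 (F : idomainType) (p q : {poly F}) d : q`_0 != 0 ->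
  (forall j, (j < d)%N -> (p * q)`_j = 0) -> forall j, (j < d)%N -> p`_j = 0.
Proof.
move=> q0_neq0 pq_low; elim/ltn_ind=> j IH j_lt_d.
move: (pq_low j j_lt_d); rewrite coefM big_ord_recr /= big1 => [|i _].
  by rewrite add0r subnn => /eqP; rewrite mulf_eq0 (negbTE q0_neq0) orbF => /eqP.
by rewrite IH ?mul0r // (ltn_trans _ j_lt_d).
Qed.

Section HornerContinuity.
Variable F : numFieldType.
Implicit Types (p : {poly F}) (z w : F).

Lemma horner_lipschitz_near p z : exists2 L : F, 0 <= L &
  forall w, `|w - z| <= 1 -> `|p.[w] - p.[z]| <= L * `|w - z|.
Proof.
elim/poly_ind: p => [|p a [L L_ge0 IH]].
  by exists 0 => // w _; rewrite !horner0 subrr normr0 mul0r.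
exists (L * (`|z| + 1) + `|p.[z]|) => [|w wz_le1].
  by rewrite addr_ge0 ?mulr_ge0 ?addr_ge0.
have w_le : `|w| <= `|z| + 1.
  by rewrite -[w](subrK z) (le_trans (ler_normD _ _)) // addrC lerD2l.
rewrite !hornerMXaddC.
have -> : p.[w] * w + a - (p.[z] * z + a) = (p.[w] - p.[z]) * w + p.[z] * (w - z).
  by ring.
rewrite (le_trans (ler_normD _ _)) // !normrM mulrDl lerD2r mulrAC.
by rewrite ler_pM ?normr_ge0 // IH.
Qed.

Lemma horner_continuous p z eps : 0 < eps -> exists2 delta : F, 0 < delta &
  forall w, `|w - z| < delta -> `|p.[w] - p.[z]| < eps.
Proof.
move=> eps_gt0; have [L L_ge0 HL] := horner_lipschitz_near p z.
have L1_gt0 : 0 < L + 1 by rewrite ltr_wpDl.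
have K_gt0 : 0 < eps + (L + 1) by rewrite addr_gt0.
pose delta := eps / (eps + (L + 1)).
have delta_le1 : delta <= 1.
  by rewrite ler_pdivrMr // mul1r lerDl ltW.
have L_delta : L * delta < eps.
  rewrite mulrA ltr_pdivrMr // [L * eps]mulrC ltr_pM2l //.
  by rewrite ltr_pwDl // lerDl.
exists delta => [|w wz]; first by rewrite divr_gt0.
have wz_le1 : `|w - z| <= 1 := le_trans (ltW wz) delta_le1.
rewrite (le_lt_trans (HL w wz_le1)) // (le_lt_trans _ L_delta) //.
by rewrite ler_wpM2l // ltW.
Qed.

End HornerContinuity.

Section JuliaInvariance.
Variable R : realType.
Implicit Types (p : {poly R[i]}) (z : R[i]).

Lemma filled_julia_horner p z : filled_julia p p.[z] <-> filled_julia p z.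
Proof.
split=> [[M HM]|[M HM]]; last by exists M => k; have := HM k.+1; rewrite iterSr.
have norm_z : `|z| = (complex.Re `|z|)%:C by rewrite RRe_real ?normr_real.
exists (Num.max M (complex.Re `|z|)) => -[|k].
  by rewrite /= norm_z lecR le_max lexx orbT.
by rewrite iterSr (le_trans (HM k)) // lecR le_max lexx.
Qed.

Lemma julia_horner p z : julia p z -> julia p p.[z].
Proof.
move=> Jz eps eps_gt0.
have [delta delta_gt0 Hdelta] : exists2 delta : R, 0 < delta &
    forall w, `|w - z| < delta%:C -> `|p.[w] - p.[z]| < eps%:C.
  have eps_gt0' : 0 < eps%:C by rewrite ltcR.
  have [d d_gt0 Hd] := horner_continuous p z eps_gt0'.
  have d_real : (complex.Re d)%:C = d by rewrite RRe_real ?gtr0_real.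
  by exists (complex.Re d); rewrite ?d_real // -ltcR d_real.
have [[w [Jw wz]] [v [Jv vz]]] := Jz delta delta_gt0.
split; [exists p.[w] | exists p.[v]]; split; rewrite ?Hdelta //.
- exact/filled_julia_horner.
- by move/filled_julia_horner.
Qed.

End JuliaInvariance.

Section CirclePolynomials.
Variable R : rcfType.
Implicit Types (p : {poly R[i]}) (u : R[i]) (r : R).

Definition cayley_point (t : nat) : R[i] := (1 +i* t%:R) / (1 +i* t%:R)^*.

Lemma cayley_numer_neq0 t : (1 +i* t%:R : R[i]) != 0.
Proof. by rewrite eq_complex /= oner_eq0. Qed.

Lemma norm_cayley_point t : `|cayley_point t| = 1.
Proof. by rewrite normrM normfV normcJ mulfV // normr_eq0 cayley_numer_neq0. Qed.

Lemma cayley_point_inj : injective cayley_point.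
Proof.
move=> s t; rewrite /cayley_point => /eqP.
rewrite eqr_div ?conjc_eq0 ?cayley_numer_neq0 //= => /eqP; simpc => /eqP.
rewrite eq_complex /= => /andP [_ /eqP st].
have : (s%:R : R) = t%:R by lra.
by move/eqP; rewrite eqr_nat => /eqP.
Qed.

Lemma poly_eq0_on_circle p r : 0 < r ->
  (forall u, `|u| = r%:C -> p.[u] = 0) -> p = 0.
Proof.
move=> r_gt0 p_circle; have r_neq0 : r%:C != 0 by rewrite eq_complex /= gt_eqF.
apply: (@roots_geq_poly_eq0 _ p [seq r%:C * cayley_point t | t <- iota 0 (size p)]).
- apply/allP => _ /mapP [t _ ->]; apply/eqP/p_circle.
  by rewrite normrM norm_cayley_point mulr1 gtr0_norm // ltcR.
- by rewrite map_inj_uniq ?iota_uniq // => s t /(mulfI r_neq0) /cayley_point_inj.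
- by rewrite size_map size_iota.
Qed.

(* [X^d * p^*(r^2 / X)] for [d = (size p).-1], with [p^*] the coefficientwise
   conjugate of [p]. *)
Definition circle_reflect r p : {poly R[i]} :=
  \sum_(j < size p) ((p`_j)^* * r%:C ^+ (2 * j)) *: 'X^((size p).-1 - j).

Lemma horner_circle_reflect r p u : `|u| = r%:C ->
  (circle_reflect r p).[u] = u ^+ (size p).-1 * (p.[u])^*.
Proof.
move=> u_r; rewrite [p.[u]]horner_coef rmorph_sum mulr_sumr horner_sum.
apply: eq_bigr => j _; rewrite hornerZ hornerXn rmorphM rmorphXn /=.
have j_le : (j <= (size p).-1)%N by rewrite -ltnS prednK // (leq_ltn_trans _ (ltn_ord j)).
rewrite -[in RHS](subnKC j_le) exprD exprM -u_r sqr_normc exprMn.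
by ring.
Qed.

Lemma coef0_circle_reflect r p : p != 0 ->
  (circle_reflect r p)`_0 = (lead_coef p)^* * r%:C ^+ (2 * (size p).-1).
Proof.
move=> p_neq0; rewrite lead_coefE /circle_reflect coef_sum.
set d := (size p).-1; have -> : size p = d.+1 by rewrite prednK // size_poly_gt0.
rewrite big_ord_recr /= big1 => [|j _].
  by rewrite coefZ coefXn subnn eqxx mulr1 add0r.
by rewrite coefZ coefXn eq_sym subn_eq0 leqNgt ltn_ord mulr0.
Qed.

Lemma circle_invariant_monomial r p : 0 < r ->
  (forall u, `|u| = r%:C -> `|p.[u]| = r%:C) -> p = lead_coef p *: 'X^((size p).-1).
Proof.
move=> r_gt0 p_circle.
have r_normC : `|r%:C| = r%:C by rewrite gtr0_norm // ltcR.
have p_neq0 : p != 0.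
  apply: contra_eq_neq (p_circle _ r_normC) => ->.
  by rewrite horner0 normr0 eq_sym eq_complex /= gt_eqF.
set d := (size p).-1.
have p_reflect : p * circle_reflect r p = r%:C ^+ 2 *: 'X^d.
  apply/eqP; rewrite -subr_eq0; apply/eqP/(poly_eq0_on_circle r_gt0) => u u_r.
  rewrite hornerD hornerN hornerM hornerZ hornerXn horner_circle_reflect //.
  by rewrite mulrCA -sqr_normc p_circle // mulrC subrr.
have low : forall j, (j < d)%N -> p`_j = 0.
  apply: (@coef_mul_low_eq0 _ _ (circle_reflect r p)) => [|j j_lt_d].
  - rewrite coef0_circle_reflect // mulf_neq0 ?conjc_eq0 ?lead_coef_eq0 //.
    by rewrite expf_neq0 // eq_complex /= gt_eqF.
  - by rewrite p_reflect coefZ coefXn (ltn_eqF j_lt_d) mulr0.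
apply/polyP => j; rewrite coefZ coefXn.
have [j_lt_d|d_lt_j|->] := ltngtP j d; first by rewrite low ?mulr0.
  by rewrite mulr0 nth_default // (leq_trans (leqSpred _) d_lt_j).
by rewrite mulr1 lead_coefE.
Qed.

End CirclePolynomials.

Lemma julia_circle_shifted_power (R : realType) (p : {poly R[i]}) (c : R[i]) (r : R) :
  (1 < size p)%N -> 0 < r -> (forall z, julia p z <-> `|z - c| = r%:C) ->
  exists2 k, p = k *: ('X - c%:P) ^+ (size p).-1 + c%:P
           & `|k| * r%:C ^+ (size p).-1 = r%:C.
Proof.
move=> p_gt1 r_gt0 Jp.
pose S := p \Po ('X + c%:P) - c%:P.
have S_circle u : `|u| = r%:C -> `|S.[u]| = r%:C.
  move=> u_r; have /julia_horner/Jp : julia p (u + c) by apply/Jp; rewrite addrK.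
  by rewrite /S hornerD hornerN horner_comp hornerD hornerX hornerC.
have sizeS : size S = size p.
  rewrite size_polyDl size_comp_poly2 ?size_XaddC // size_polyN.
  exact: leq_ltn_trans (size_polyC_leq1 _) p_gt1.
have S_mono := circle_invariant_monomial r_gt0 S_circle; rewrite sizeS in S_mono.
exists (lead_coef S).
  have p_eq : p = (S + c%:P) \Po ('X - c%:P) by rewrite subrK comp_polyXaddC_K.
  by rewrite {1}p_eq {1}S_mono comp_polyD comp_polyZ comp_Xn_poly comp_polyC.
have r_normC : `|r%:C| = r%:C by rewrite gtr0_norm // ltcR.
have := S_circle _ r_normC.
by rewrite {1}S_mono hornerZ hornerXn normrM normrX r_normC.
Qed.

Section IndependenceCounts.
Variables (T : finType) (e : rel T).

Lemma independent0 : independent e set0.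
Proof. by apply/forall_inP => x; rewrite in_set0. Qed.

Lemma card_independent_le A : independent e A -> (#|A| <= indep_number e)%N.
Proof. exact: (leq_bigmax_cond (P := independent e)). Qed.

Lemma exists_max_independent : exists2 A, independent e A & #|A| = indep_number e.
Proof.
have : (0 < #|[pred A : {set T} | independent e A]|)%N.
  by apply/card_gt0P; exists set0; rewrite inE independent0.
case/(eq_bigmax_cond (fun A : {set T} => #|A|)) => A.
by rewrite inE => indA maxA; exists A; rewrite // /indep_number maxA.
Qed.

Lemma indep_number_le_card : (indep_number e <= #|T|)%N.
Proof. by have [A _ <-] := exists_max_independent; apply: max_card. Qed.

Lemma edgeless_of_indep_number_card :
  indep_number e = #|T| -> forall x y, ~~ e x y.
Proof.
move=> alpha_T x y; have [A indA cardA] := exists_max_independent.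
have A_T : A = setT by apply/eqP; rewrite eqEcard subsetT cardsT cardA alpha_T /=.
by move: indA; rewrite A_T => /forall_inP /(_ x (in_setT x)) /forall_inP; apply.
Qed.

Lemma indep_count_eq0 i : (indep_number e < i)%N -> indep_count e i = 0%N.
Proof.
move=> alpha_lt_i; apply: eq_card0 => A; rewrite !inE.
apply/andP => -[/card_independent_le A_le /eqP cardA].
by move: (leq_ltn_trans A_le alpha_lt_i); rewrite cardA ltnn.
Qed.

Lemma indep_count_all i : (forall A : {set T}, #|A| = i -> independent e A) ->
  indep_count e i = 'C(#|T|, i).
Proof.
move=> all_indep; rewrite /indep_count -card_draws; apply: eq_card => A.
by rewrite !inE; case: eqP => [/all_indep ->|]; rewrite ?andbF.
Qed.

Lemma indep_count0 : indep_count e 0 = 1%N.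
Proof.
rewrite indep_count_all ?bin0 // => A /eqP; rewrite cards_eq0 => /eqP ->.
exact: independent0.
Qed.

Lemma indep_count1 : irreflexive e -> indep_count e 1 = #|T|.
Proof.
move=> irr; rewrite indep_count_all ?bin1 // => A /eqP /cards1P [a ->].
by apply/forall_inP => x /set1P ->; apply/forall_inP => y /set1P ->; rewrite irr.
Qed.

Lemma indep_count_edgeless i : (forall x y, ~~ e x y) ->
  indep_count e i = 'C(#|T|, i).
Proof.
move=> edgeless; apply: indep_count_all => A _.
by apply/forall_inP => x _; apply/forall_inP => y _.
Qed.

Lemma red_indep_polyE (F : nzRingType) :
  red_indep_poly F e = \poly_(i < (indep_number e).+1) (indep_count e i)%:R - 1.
Proof. by rewrite /red_indep_poly /indep_poly poly_def. Qed.

Lemma coef_red_indep_poly (F : nzRingType) j :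
  (red_indep_poly F e)`_j = (indep_count e j)%:R - (j == 0)%:R.
Proof.
rewrite red_indep_polyE coefB coef_poly coef1.
by case: ltnP => // /indep_count_eq0 ->.
Qed.

Lemma size_red_indep_poly (F : numDomainType) :
  (0 < indep_number e)%N -> size (red_indep_poly F e) = (indep_number e).+1.
Proof.
move=> alpha_gt0; have [A indA cardA] := exists_max_independent.
have count_gt0 : (0 < indep_count e (indep_number e))%N.
  by apply/card_gt0P; exists A; rewrite inE indA cardA eqxx.
rewrite red_indep_polyE size_polyDl size_poly_eq ?pnatr_eq0 -?lt0n //.
by rewrite size_polyN size_poly1 ltnS.
Qed.

Section ShiftedPower.
Variables (F : numDomainType) (n : nat) (k c : F).
Hypotheses (irr : irreflexive e) (n_gt1 : (1 < n)%N) (alpha_n : indep_number e = n).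
Hypothesis P_eq : red_indep_poly F e = k *: ('X - c%:P) ^+ n + c%:P.

Let coefP j : (indep_count e j)%:R - (j == 0)%:R =
  k * ((- c) ^+ (n - j) *+ 'C(n, j)) + (if j == 0%N then c else 0).
Proof. by rewrite -coef_red_indep_poly P_eq coef_shifted_power. Qed.

Lemma card_eq_shifted_power_degree : #|T| = n.
Proof.
have n_gt0 := ltnW n_gt1.
have kc_n : k * (- c) ^+ n = - c.
  move: (coefP 0%N); rewrite indep_count0 subrr subn0 bin0 mulr1n /=.
  by move/eqP; rewrite eq_sym addr_eq0 => /eqP.
have T_eq : (#|T|%:R : F) = k * (- c) ^+ n.-1 *+ n.
  by move: (coefP 1%N); rewrite indep_count1 // subr0 addr0 bin1 subn1 mulrnAr.
have c_neq0 : - c != 0.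
  apply: contraTneq (indep_number_le_card) => c0.
  move: T_eq; rewrite c0 expr0n -subn1 subn_eq0 leqNgt n_gt1 mulr0 mul0rn.
  by move/eqP; rewrite pnatr_eq0 => /eqP ->; rewrite alpha_n -ltnNge.
have kc_pred : k * (- c) ^+ n.-1 = 1.
  by apply: (mulIf c_neq0); rewrite mul1r -mulrA -exprSr prednK.
by apply/eqP; rewrite -(eqr_nat F) T_eq kc_pred.
Qed.

Lemma shifted_power_eq_binomial : k = 1 /\ c = -1.
Proof.
have n_gt0 := ltnW n_gt1; have T_n := card_eq_shifted_power_degree.
have binom i : (indep_count e i)%:R = 'C(n, i)%:R :> F.
  rewrite indep_count_edgeless ?T_n //.
  by apply: edgeless_of_indep_number_card; rewrite alpha_n T_n.
have k1 : k = 1.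
  move: (coefP n); rewrite binom binn subnn expr0 mulr1 (gtn_eqF n_gt0).
  by rewrite subr0 addr0.
have n_neq0 : n%:R != 0 :> F by rewrite pnatr_eq0 -lt0n.
split=> //; apply: oppr_inj; apply: (mulIf n_neq0).
move: (coefP n.-1); rewrite binom -subn1 bin_sub ?leq_subr // subKn // bin1.
by rewrite subn_eq0 leqNgt n_gt1 k1 mul1r expr1 subr0 addr0 mulr_natr opprK mul1r => <-.
Qed.

End ShiftedPower.

End IndependenceCounts.

Theorem lemma3p2 (R : realType) (n : nat) (T : finType) (e : rel T) :
  simple_graph e ->
  (2 <= n)%N ->
  indep_number e = n ->
  is_circle (julia (red_indep_poly R[i] e)) ->
  (#|T| = n /\ forall x y : T, ~~ e x y) /\
  (forall z : R[i], julia (red_indep_poly R[i] e) z <-> `|z + 1| = 1).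
Proof.
move=> [_ irr] n_gt1 alpha_n [c [r [r_gt0 J_circle]]].
have sizeP : size (red_indep_poly R[i] e) = n.+1.
  by rewrite size_red_indep_poly alpha_n // ltnW.
have [|k P_eq kr] := julia_circle_shifted_power _ r_gt0 J_circle.
  by rewrite sizeP ltnS ltnW.
rewrite sizeP /= in P_eq kr.
have T_n := card_eq_shifted_power_degree irr n_gt1 alpha_n P_eq.
have [k1 c1] := shifted_power_eq_binomial irr n_gt1 alpha_n P_eq.
have r1 : r = 1.
  apply: (pexpr_id_eq1 r_gt0 n_gt1); apply: complexI.
  by rewrite rmorphXn -kr k1 normr1 mul1r.
split; last by move=> z; rewrite J_circle c1 r1 opprK.
by split=> //; apply: edgeless_of_indep_number_card; rewrite alpha_n T_n.
Qed.
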